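(* Let $n\ge2$ and let $Gr_n$ be the grid graph with vertex set $\{0,\dots,2^n\}^2$, edges between points at $\ell_1$-distance 1, and the $\ell_1$-metric. Let $T=\bigcup_{k=0}^{n-2}T_k$ with $T_k=\{1,2,3,4\}^k$ ($T_0=\{\emptyset\}$), and for $t\in T_k$ write $|t|=k$. Then there exist signed measures $\{\mu_t\}_{t\in T}$ on $V(Gr_n)$, each of total mass $0$, such that for every $t\in T$: (P1) $\mathrm{diam}(\mathrm{supp}(\mu_t))\le C_12^{n-|t|}$; (P2) for every $t'\in T\setminus\{t\}$, $\mathrm{dist}(\mathrm{supp}(\mu_t),\mathrm{supp}(\mu_{t'}))\ge C_2^{-1}2^{n-\max(|t|,|t'|)}$; (P3) $\|\mu_t\|_{\mathrm{TC}}\ge C_3^{-1}4^{-|t|}$; (P4) for every $A\subseteq V(Gr_n)$, $|\mu_t(A)|\le C_4\min\{2^{-n-1-|t|},\,4^{-n}(\mathrm{diam}(A)+1)\}$; (P5) there is $u\in V(Gr_n)$ such that $\mathrm{supp}(\mu_t)\cup\{u\}$ induces a connected subgraph of $Gr_n$; with $C_1=\tfrac12$, $C_2=4$, $C_3=16$, $C_4=1$.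
   Context: $\mathrm{supp}(\mu)=\{v:\mu(\{v\})\ne0\}$; diam and dist are with respect to the $\ell_1$-metric on $V(Gr_n)$. $\|\mu\|_{\mathrm{TC}}=\inf\sum_ia_i d(x_i,y_i)$ over representations $\mu=\sum_ia_i(\delta_{x_i}-\delta_{y_i})$ with $a_i\ge0$. *)

From HB Require Import structures.
From mathcomp Require Import all_boot all_order all_algebra.
From mathcomp Require Import classical_sets reals.
Set Implicit Arguments. Unset Strict Implicit. Unset Printing Implicit Defensive.
Import Order.TTheory GRing.Theory Num.Theory.
Local Open Scope ring_scope.

Definition V (n : nat) : finType := ('I_(2 ^ n).+1 * 'I_(2 ^ n).+1)%type.

Definition absdiff (a b : nat) : nat := ((a - b) + (b - a))%N.

Definition l1 {n : nat} (x y : V n) : nat :=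
  (absdiff (val x.1) (val y.1) + absdiff (val x.2) (val y.2))%N.

Definition adj {n : nat} : rel (V n) := fun x y => l1 x y == 1%N.

(* diameter of a set of vertices (0 for the empty set) *)
Definition diam {n : nat} (A : {set V n}) : nat :=
  \max_(x in A) \max_(y in A) l1 x y.

Definition induced_connected {n : nat} (S : {set V n}) : Prop :=
  forall x y, x \in S -> y \in S ->
    connect (fun a b => [&& a \in S, b \in S & adj a b]) x y.

Section Measures.
Variable R : realType.
Variable n : nat.

(* a signed measure on the finite set V(Gr_n) is given by its point masses *)
Definition meas (mu : V n -> R) (A : {set V n}) : R := \sum_(v in A) mu v.

Definition supp (mu : V n -> R) : {set V n} := [set v | mu v != 0].

(* representations mu = sum_i a_i (delta_{x_i} - delta_{y_i}), a_i >= 0 *)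
Definition is_TC_repr (mu : V n -> R) (s : seq (R * V n * V n)) : Prop :=
  (forall p, p \in s -> 0 <= p.1.1) /\
  (forall v, mu v = \sum_(p <- s) p.1.1 * ((p.1.2 == v)%:R - (p.2 == v)%:R)).

Definition TC_cost (s : seq (R * V n * V n)) : R :=
  \sum_(p <- s) p.1.1 * (l1 p.1.2 p.2)%:R.

Definition TCnorm (mu : V n -> R) : R :=
  inf [set c | exists s, is_TC_repr mu s /\ c = TC_cost s].
End Measures.

(* Read the letters of t, with |t| = k, as successive quadrant choices: they
   single out a dyadic square, the cell of t, of side 2^(n-k).  With
   Q = 2^(n-k-2) and c the centre of the cell, mu_t is 4^-n times the sum over
   j = 1..Q of delta(c + (0,j)) - delta(c + (j,0)): a cross with a positive
   vertical and a negative horizontal arm, of diameter 2Q, connected through c.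
   In each coordinate the cross lies between 2Q and 3Q from the corner of its
   cell, so crosses of distinct cells of the same depth are Q apart.  Each of
   its points also lies on a centre line of its cell, which is a multiple of the
   side of every deeper cell, and a deeper cross stays a quarter of its own side
   away from such lines.  The mass of a set A is 4^-n times the difference of
   the numbers of points of the two arms in A, each at most min(Q, diam A + 1).
   Finally the 1-Lipschitz potential v |-> v_2 - v_1 integrates against mu_t to
   4^-n Q(Q+1), which bounds the transportation cost from below by weak
   duality. *)

From HB Require Import structures.
From mathcomp Require Import all_boot all_order all_algebra.
From mathcomp Require Import classical_sets reals.
From mathcomp Require Import zify ring lra.
Import Order.TTheory GRing.Theory Num.Theory.
Local Open Scope ring_scope.

Lemma absdiffC a b : absdiff a b = absdiff b a.
Proof. by rewrite /absdiff addnC. Qed.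

Lemma absdiff_grid_mid {Q a b r} : (4 * Q %| a)%N -> (4 * Q %| b)%N ->
  (2 * Q <= r <= 3 * Q)%N -> (Q <= absdiff a (b + r))%N.
Proof.
move=> /dvdnP [c ->] /dvdnP [d ->] /andP [r_ge r_le]; rewrite /absdiff.
by case: (leqP c d) => cd; have := leq_mul cd (leqnn (4 * Q)); rewrite ?mulSn; lia.
Qed.

Lemma absdiff_mid_mid {Q a b r r'} : (4 * Q %| a)%N -> (4 * Q %| b)%N -> a != b ->
  (2 * Q <= r <= 3 * Q)%N -> (2 * Q <= r' <= 3 * Q)%N ->
  (Q <= absdiff (a + r) (b + r'))%N.
Proof.
move=> /dvdnP [c ->] /dvdnP [d ->] a_neq_b /andP [r_ge r_le] /andP [r'_ge r'_le].
rewrite /absdiff; case: (ltngtP c d) => cd; last by rewrite cd eqxx in a_neq_b.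
  by have := leq_mul cd (leqnn (4 * Q)); rewrite mulSn; lia.
by have := leq_mul cd (leqnn (4 * Q)); rewrite mulSn; lia.
Qed.

Lemma count_iota_le_spread (p : pred nat) D lo N :
  (forall i j, i \in iota lo N -> j \in iota lo N -> p i -> p j -> (j <= i + D)%N) ->
  (count p (iota lo N) <= D.+1)%N.
Proof.
elim: N lo => [|N IH] lo spread //=.
case: (boolP (p lo)) => [p_lo|_]; last first.
  by apply: IH => i j hi hj; apply: spread; rewrite inE ?hi ?hj orbT.
rewrite add1n ltnS -size_filter.
apply: leq_trans (uniq_leq_size (s2 := iota lo.+1 D) _ _) _.
- exact: filter_uniq (iota_uniq _ _).
- move=> j; rewrite mem_filter => /andP [p_j hj].
  have := spread lo j; rewrite !inE eqxx hj orbT => /(_ isT isT p_lo p_j).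
  by move: hj; rewrite !mem_iota; lia.
- by rewrite size_iota.
Qed.

Lemma sum_iota_double Q : (Q * Q <= \sum_(j <- iota 1 Q) j.*2)%N.
Proof.
elim: Q => [//|Q IH].
by rewrite -addn1 iotaD big_cat big_seq1 /=; lia.
Qed.

Lemma sumr_nat_count (R : pzSemiRingType) (T : Type) (b : pred T) (s : seq T) :
  \sum_(j <- s) ((b j)%:R : R) = (count b s)%:R.
Proof. by elim: s => [|x s IH]; rewrite ?big_nil ?big_cons //= IH natrD. Qed.

Section DyadicOffset.
Context {T : Type} (d : T -> nat).

Fixpoint dyadic_offset N (t : seq T) : nat :=
  if t is q :: t' then (d q * 2 ^ N.-1 + dyadic_offset N.-1 t')%N else 0%N.

Lemma dyadic_offset_dvd N t : (size t <= N)%N -> (2 ^ (N - size t) %| dyadic_offset N t)%N.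
Proof.
elim: t N => [|q t IH] [|N] //= t_le; rewrite subSS.
by rewrite dvdn_add ?IH // dvdn_mull // dvdn_exp2l ?leq_subr.
Qed.

Hypothesis d_le1 : forall q, (d q <= 1)%N.

Lemma dyadic_offset_bound N t : (size t <= N)%N ->
  (dyadic_offset N t + 2 ^ (N - size t) <= 2 ^ N)%N.
Proof.
elim: t N => [|q t IH] N; first by rewrite subn0.
case: N => [//|N] /= t_le; rewrite subSS expnS; have := IH N t_le; have := d_le1 q; nia.
Qed.

End DyadicOffset.

Lemma dyadic_offset_inj {T : Type} {d1 d2 : T -> nat} {N} {t t' : seq T} :
  (forall q, d1 q <= 1)%N -> (forall q, d2 q <= 1)%N ->
  (forall q q', d1 q = d1 q' -> d2 q = d2 q' -> q = q') ->
  (size t <= N)%N -> size t = size t' ->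
  dyadic_offset d1 N t = dyadic_offset d1 N t' ->
  dyadic_offset d2 N t = dyadic_offset d2 N t' -> t = t'.
Proof.
move=> d1_le1 d2_le1 d12_inj.
elim: t t' N => [|q t IH] [|q' t'] [|N] //= t_le [size_eq] e1 e2.
have t'_le : (size t' <= N)%N by rewrite -size_eq.
have digit_split d : (forall q, d q <= 1)%N ->
    (d q * 2 ^ N + dyadic_offset d N t = d q' * 2 ^ N + dyadic_offset d N t')%N ->
    d q = d q' /\ dyadic_offset d N t = dyadic_offset d N t'.
  move=> d_le1; have := dyadic_offset_bound d d_le1 _ _ t_le.
  have := dyadic_offset_bound d d_le1 _ _ t'_le.
  have := expn_gt0 2 (N - size t); have := expn_gt0 2 (N - size t').
  by have := d_le1 q; have := d_le1 q'; case: (d q) => [|[|]]; case: (d q') => [|[|]]; lia.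
have [dq1 o1] := digit_split d1 d1_le1 e1; have [dq2 o2] := digit_split d2 d2_le1 e2.
by rewrite (d12_inj q q') // (IH t' N).
Qed.

Section Representations.
Context {R : realType} {n : nat}.

Definition meas_of_repr (s : seq (R * V n * V n)) (v : V n) : R :=
  \sum_(p <- s) p.1.1 * ((p.1.2 == v)%:R - (p.2 == v)%:R).

Lemma pairing_meas_of_repr (f : V n -> R) s :
  \sum_v f v * meas_of_repr s v = \sum_(p <- s) p.1.1 * (f p.1.2 - f p.2).
Proof.
have sum_delta x : \sum_v f v * (x == v)%:R = f x.
  rewrite (bigD1 x) //= eqxx mulr1 big1 ?addr0 // => v /negbTE.
  by rewrite eq_sym => ->; rewrite mulr0.
under eq_bigr do rewrite /meas_of_repr big_distrr.
rewrite exchange_big; apply: eq_bigr => p _ /=.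
under eq_bigr do rewrite mulrCA mulrBr.
by rewrite -mulr_sumr sumrB !sum_delta.
Qed.

Lemma meas_of_repr_total s : \sum_v meas_of_repr s v = 0.
Proof.
under eq_bigr do rewrite -[meas_of_repr _ _]mul1r.
by rewrite pairing_meas_of_repr big1 // => p _; rewrite subrr mulr0.
Qed.

Lemma meas_meas_of_repr s (A : {set V n}) :
  meas (meas_of_repr s) A = \sum_(p <- s) p.1.1 * ((p.1.2 \in A)%:R - (p.2 \in A)%:R).
Proof.
rewrite /meas big_mkcond -(pairing_meas_of_repr (fun v => (v \in A)%:R)).
by apply: eq_bigr => v _; case: (v \in A); rewrite ?mul1r ?mul0r.
Qed.

Lemma pairing_le_TCnorm {mu : V n -> R} {s0} {f : V n -> R} :
  is_TC_repr mu s0 -> (forall x y, f x - f y <= (l1 x y)%:R) ->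
  \sum_v f v * mu v <= TCnorm mu.
Proof.
move=> repr0 f_lip; apply: lb_le_inf; first by exists (TC_cost s0), s0.
move=> _ [s [[s_ge0 s_repr] ->]].
rewrite (eq_bigr _ (fun v _ => congr1 (GRing.mul (f v)) (s_repr v))).
rewrite pairing_meas_of_repr /TC_cost !big_seq; apply: ler_sum => p ps.
by apply: ler_wpM2l; [exact: s_ge0 | exact: f_lip].
Qed.

End Representations.

Definition antidiag (R : realType) {n} (v : V n) : R := (val v.2)%:R - (val v.1)%:R.

Lemma antidiag_lipschitz (R : realType) n (x y : V n) :
  antidiag R x - antidiag R y <= (l1 x y)%:R.
Proof.
have absdiff_ge a b : (a%:R - b%:R : R) <= (absdiff a b)%:R.
  have : (a <= absdiff a b + b)%N by rewrite /absdiff; lia.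
  by rewrite -(ler_nat R) natrD => h; lra.
rewrite /antidiag /l1 natrD.
have := absdiff_ge (val x.2) (val y.2); have := absdiff_ge (val y.1) (val x.1).
by rewrite absdiffC; lra.
Qed.

Section Grid.
Variable n : nat.

(* [inord] sends coordinates above [2 ^ n] to [0], hence the range hypotheses
   of the lemmas on [pt]. *)
Definition pt (a b : nat) : V n := (inord a, inord b).

Definition coord (i : bool) (v : V n) : nat := val (if i then v.2 else v.1).

Lemma coord_pt i a b : (a <= 2 ^ n)%N -> (b <= 2 ^ n)%N ->
  coord i (pt a b) = if i then b else a.
Proof. by move=> a_le b_le; case: i; rewrite /coord /= inordK. Qed.

Lemma pt_eqE a b c d : (a <= 2 ^ n)%N -> (b <= 2 ^ n)%N -> (c <= 2 ^ n)%N -> (d <= 2 ^ n)%N ->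
  (pt a b == pt c d) = (a == c) && (b == d).
Proof.
move=> a_le b_le c_le d_le; apply/eqP/andP => [eq_pt|[/eqP-> /eqP->]] //.
have := congr1 (coord false) eq_pt; have := congr1 (coord true) eq_pt.
by rewrite !coord_pt // => -> ->.
Qed.

Lemma l1_pt a b c d : (a <= 2 ^ n)%N -> (b <= 2 ^ n)%N -> (c <= 2 ^ n)%N -> (d <= 2 ^ n)%N ->
  l1 (pt a b) (pt c d) = (absdiff a c + absdiff b d)%N.
Proof. by move=> a_le b_le c_le d_le; rewrite /l1 /= !inordK. Qed.

Lemma absdiff_coord_le_l1 i (x y : V n) : (absdiff (coord i x) (coord i y) <= l1 x y)%N.
Proof. by case: i; rewrite /l1 /coord /= ?leq_addl ?leq_addr. Qed.

Lemma l1C (x y : V n) : l1 x y = l1 y x.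
Proof. by rewrite /l1 absdiffC [absdiff (val x.2) _]absdiffC. Qed.

Lemma l1_le_diam {A : {set V n}} {x y} : x \in A -> y \in A -> (l1 x y <= diam A)%N.
Proof.
move=> xA yA; apply: leq_trans (leq_bigmax_cond _ xA).
exact: (leq_bigmax_cond _ yA).
Qed.

Lemma count_segment_le_diam (f : nat -> V n) (A : {set V n}) lo N :
  (forall i j, i \in iota lo N -> j \in iota lo N -> (j - i <= l1 (f i) (f j))%N) ->
  (count (fun j => f j \in A) (iota lo N) <= (diam A).+1)%N.
Proof.
move=> f_stretch; apply: count_iota_le_spread => i j hi hj fiA fjA.
by have := l1_le_diam fiA fjA; have := f_stretch i j hi hj; lia.
Qed.

Definition induced_adj (S : {set V n}) : rel (V n) :=
  fun x y => [&& x \in S, y \in S & adj x y].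

Lemma induced_connected_star (S : {set V n}) u :
  (forall x, x \in S -> connect (induced_adj S) u x) -> induced_connected S.
Proof.
move=> from_u x y xS yS.
have adj_sym : symmetric (induced_adj S).
  by move=> a b; rewrite /induced_adj /adj l1C andbCA.
apply: connect_trans (from_u y yS).
by rewrite (sym_connect_sym adj_sym) from_u.
Qed.

End Grid.

Lemma connect_chain (T : finType) (e : rel T) (P : nat -> T) m :
  (forall j, (j < m)%N -> e (P j) (P j.+1)) ->
  forall j, (j <= m)%N -> connect e (P 0%N) (P j).
Proof.
move=> step; elim=> [|j IH] j_le; first exact: connect0.
exact: connect_trans (IH (ltnW j_le)) (connect1 (step j j_le)).
Qed.

Section Cross.
Context {R : realType} {n a b Q : nat} {e : R}.
Hypotheses (a_fit : (a + Q <= 2 ^ n)%N) (b_fit : (b + Q <= 2 ^ n)%N).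

Let vert j := pt n a (b + j).
Let horz j := pt n (a + j) b.

Definition cross_repr : seq (R * V n * V n) := [seq (e, vert j, horz j) | j <- iota 1 Q].

Definition cross : V n -> R := meas_of_repr cross_repr.

Lemma cross_supp v : v \in supp cross -> exists2 j, (0 < j <= Q)%N & v = vert j \/ v = horz j.
Proof.
rewrite inE /cross /meas_of_repr big_map.
have [/hasP [j]|/hasPn not_end] := boolP (has (fun j => (vert j == v) || (horz j == v)) (iota 1 Q)).
  by rewrite mem_iota => j_range /orP [] /eqP <- _; exists j; rewrite ?add1n //; [left|right].
rewrite big1_seq ?eqxx // => j /andP [_ /not_end].
by rewrite negb_or => /andP [/negbTE -> /negbTE ->]; rewrite subrr mulr0.
Qed.

Lemma vert_horz_eq {i j} : (i <= Q)%N -> (j <= Q)%N ->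
  [/\ (vert i == vert j) = (i == j), (horz i == horz j) = (i == j)
    & (horz i == vert j) = (i == 0%N) && (j == 0%N)].
Proof. by move=> i_le j_le; rewrite !pt_eqE; try lia; split; apply/idP/idP; lia. Qed.

Lemma cross_vert j : (0 < j <= Q)%N -> cross (vert j) = e.
Proof.
move=> /andP [j_gt0 j_le].
rewrite /cross /meas_of_repr big_map (eq_big_seq (fun i => e * (i == j)%:R)); last first.
  move=> i; rewrite mem_iota add1n ltnS => /andP [i_gt0 i_le] /=.
  have [-> _ ->] := vert_horz_eq i_le j_le.
  by rewrite (negbTE (lt0n_neq0 i_gt0)) subr0.
rewrite -mulr_sumr sumr_nat_count (count_uniq_mem _ (iota_uniq _ _)).
by rewrite mem_iota add1n ltnS j_gt0 j_le mulr1.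
Qed.

Lemma cross_horz j : (0 < j <= Q)%N -> cross (horz j) = - e.
Proof.
move=> /andP [j_gt0 j_le].
rewrite /cross /meas_of_repr big_map (eq_big_seq (fun i => - (e * (i == j)%:R))); last first.
  move=> i; rewrite mem_iota add1n ltnS => /andP [i_gt0 i_le] /=.
  have [_ -> _] := vert_horz_eq i_le j_le; rewrite eq_sym.
  have [_ _ ->] := vert_horz_eq j_le i_le.
  by rewrite (negbTE (lt0n_neq0 j_gt0)) sub0r mulrN.
rewrite sumrN -mulr_sumr sumr_nat_count (count_uniq_mem _ (iota_uniq _ _)).
by rewrite mem_iota add1n ltnS j_gt0 j_le mulr1.
Qed.

Lemma diam_supp_cross : (diam (supp cross) <= 2 * Q)%N.
Proof.
apply/bigmax_leqP => x /cross_supp [i /andP [_ i_le] x_eq].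
apply/bigmax_leqP => y /cross_supp [j /andP [_ j_le] y_eq].
by case: x_eq y_eq => -> [] ->; rewrite /vert /horz l1_pt /absdiff; lia.
Qed.

Lemma meas_cross (A : {set V n}) :
  meas cross A = e * ((count (fun j => vert j \in A) (iota 1 Q))%:R
                      - (count (fun j => horz j \in A) (iota 1 Q))%:R).
Proof. by rewrite meas_meas_of_repr big_map -mulr_sumr sumrB !sumr_nat_count. Qed.

Hypothesis e_gt0 : 0 < e.

Lemma normr_meas_cross_le M (A : {set V n}) :
  (count (fun j => vert j \in A) (iota 1 Q) <= M)%N ->
  (count (fun j => horz j \in A) (iota 1 Q) <= M)%N ->
  `|meas cross A| <= e * M%:R.
Proof.
rewrite meas_cross normrM gtr0_norm // -!(ler_nat R) => vert_le horz_le.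
rewrite ler_pM2l // ler_norml; apply/andP; split.
  by have := ler0n R (count (fun j => vert j \in A) (iota 1 Q)); lra.
by have := ler0n R (count (fun j => horz j \in A) (iota 1 Q)); lra.
Qed.

Lemma normr_meas_cross_le_len (A : {set V n}) : `|meas cross A| <= e * Q%:R.
Proof. by apply: normr_meas_cross_le; rewrite (leq_trans (count_size _ _)) ?size_iota. Qed.

Lemma normr_meas_cross_le_diam (A : {set V n}) : `|meas cross A| <= e * ((diam A)%:R + 1).
Proof.
rewrite natr1; apply: normr_meas_cross_le; apply: count_segment_le_diam => i j;
  by rewrite !mem_iota => i_range j_range; rewrite /vert /horz l1_pt /absdiff; lia.
Qed.

Lemma TCnorm_cross : e * (Q * Q)%:R <= TCnorm cross.
Proof.
have cross_TC_repr : is_TC_repr cross cross_repr.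
  by split=> // p /mapP [j _ ->] /=; exact: ltW.
apply: le_trans _ (pairing_le_TCnorm cross_TC_repr (antidiag_lipschitz R n)).
rewrite pairing_meas_of_repr big_map (eq_big_seq (fun j => e * (j.*2)%:R)); last first.
  move=> j; rewrite mem_iota => j_range; rewrite /antidiag /= !inordK; try lia.
  by rewrite -addnn !natrD; congr (_ * _); lra.
by rewrite -mulr_sumr -natr_sum ler_pM2l // ler_nat sum_iota_double.
Qed.

Lemma cross_connected : induced_connected (pt n a b |: supp cross).
Proof.
set S := pt n a b |: supp cross.
have e_neq0 : e != 0 by rewrite gt_eqF.
have vert_in j : (j <= Q)%N -> vert j \in S.
  case: j => [_|j j_le]; first by rewrite /vert addn0 setU11.
  by rewrite !inE cross_vert ?e_neq0 ?orbT.
have horz_in j : (j <= Q)%N -> horz j \in S.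
  case: j => [_|j j_le]; first by rewrite /horz addn0 setU11.
  by rewrite !inE cross_horz ?oppr_eq0 ?e_neq0 ?orbT.
apply: (@induced_connected_star _ S (pt n a b)) => x.
rewrite in_setU1 => /predU1P [->|/cross_supp [j /andP [_ j_le] [->|->]]]; first exact: connect0.
- have -> : pt n a b = vert 0 by rewrite /vert addn0.
  apply: (@connect_chain _ _ vert Q) j_le => i i_lt.
  rewrite /induced_adj !vert_in ?(ltnW i_lt) //= /adj /vert l1_pt /absdiff; lia.
- have -> : pt n a b = horz 0 by rewrite /horz addn0.
  apply: (@connect_chain _ _ horz Q) j_le => i i_lt.
  rewrite /induced_adj !horz_in ?(ltnW i_lt) //= /adj /horz l1_pt /absdiff; lia.
Qed.

End Cross.

(* The letter [q] of [t] selects the quadrant with offset [(q mod 2, q div 2)]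
   (in units of half the side) of the parent cell. *)
Definition digit (i : bool) (q : 'I_4) : nat := (if i then q %/ 2 else q %% 2)%N.

Definition corner n i (t : seq 'I_4) : nat := dyadic_offset (digit i) n t.

Definition quarter n k : nat := 2 ^ (n - k - 2).

Definition center n i (t : seq 'I_4) : nat := corner n i t + 2 * quarter n (size t).

Definition cell_meas (R : realType) n t : V n -> R :=
  @cross R n (center n false t) (center n true t) (quarter n (size t)) (4 ^- n).

Lemma digit_le1 i q : (digit i q <= 1)%N.
Proof.
case: i; rewrite /digit -ltnS; last exact: ltn_mod.
by rewrite ltn_divLR //; have := ltn_ord q; lia.
Qed.

Lemma digit_inj q q' : digit false q = digit false q' -> digit true q = digit true q' -> q = q'.
Proof.
rewrite /digit => mod_eq div_eq; apply: val_inj.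
by rewrite /= (divn_eq q 2) (divn_eq q' 2) mod_eq div_eq.
Qed.

Lemma quarter_side n k : (k + 2 <= n)%N -> (4 * quarter n k = 2 ^ (n - k))%N.
Proof. by move=> k_fit; rewrite /quarter -[4%N]/(2 ^ 2)%N -expnD; congr (2 ^ _)%N; lia. Qed.

Lemma quarter_dvd {n k k'} : (k < k')%N -> (k' + 2 <= n)%N ->
  (4 * quarter n k' %| 2 * quarter n k)%N.
Proof. by move=> lt_kk' k'_fit; rewrite quarter_side // /quarter -expnS dvdn_exp2l //; lia. Qed.

Lemma quarter_sq {n k} : (k + 2 <= n)%N -> (16 * (quarter n k * quarter n k) * 4 ^ k = 4 ^ n)%N.
Proof.
move=> k_fit; rewrite /quarter -[4%N]/(2 ^ 2)%N -!expnM -[16%N]/(2 ^ 4)%N -!expnD.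
by congr (2 ^ _)%N; lia.
Qed.

Lemma quarter_mass {n k} : (k + 2 <= n)%N -> (2 * 2 ^ (n + 1 + k) * quarter n k = 4 ^ n)%N.
Proof.
move=> k_fit; rewrite /quarter -expnS -expnD -[4%N]/(2 ^ 2)%N -expnM.
by congr (2 ^ _)%N; lia.
Qed.

Lemma quarter_diam_scale (R : numFieldType) {n k} : (k + 2 <= n)%N ->
  ((2 * quarter n k)%:R : R) = 2^-1 * 2 ^+ (n - k).
Proof. by move=> k_fit; rewrite -natrX -quarter_side // !natrM; field. Qed.

Lemma quarter_TC_scale (R : numFieldType) {n k} : (k + 2 <= n)%N ->
  4 ^- n * ((quarter n k * quarter n k)%:R : R) = 16^-1 * 4 ^- k.
Proof.
move=> k_fit; rewrite -natrX -(quarter_sq k_fit) !natrM natrX.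
by field; rewrite expf_neq0 ?pnatr_eq0 // -lt0n expn_gt0.
Qed.

Lemma quarter_mass_scale (R : realFieldType) {n k} : (k + 2 <= n)%N ->
  4 ^- n * ((quarter n k)%:R : R) <= 2 ^- (n + 1 + k).
Proof.
move=> k_fit; rewrite -natrX -(quarter_mass k_fit) !natrM natrX.
have q_neq0 : (quarter n k)%:R != 0 :> R by rewrite pnatr_eq0 -lt0n expn_gt0.
have X_gt0 : 0 < (2 : R) ^+ (n + 1 + k) by rewrite exprn_gt0.
have -> : (2 * 2 ^+ (n + 1 + k) * (quarter n k)%:R)^-1 * (quarter n k)%:R
          = (2 ^+ (n + 1 + k))^-1 / 2 :> R by field; rewrite gt_eqF.
have : 0 < (2 : R) ^- (n + 1 + k) by rewrite invr_gt0.
lra.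
Qed.

Section Cell.
Context {n : nat} {t : seq 'I_4}.
Hypothesis t_fit : (size t + 2 <= n)%N.

Lemma corner_dvd i : (4 * quarter n (size t) %| corner n i t)%N.
Proof. by rewrite quarter_side // dyadic_offset_dvd //; lia. Qed.

Lemma corner_fit i : (corner n i t + 4 * quarter n (size t) <= 2 ^ n)%N.
Proof. by rewrite quarter_side // dyadic_offset_bound //; [exact: digit_le1|lia]. Qed.

Lemma center_fit i : (center n i t + quarter n (size t) <= 2 ^ n)%N.
Proof. by have := corner_fit i; rewrite /center; lia. Qed.

Lemma corner_neq {t'} : size t = size t' -> t' != t -> exists i, corner n i t != corner n i t'.
Proof.
move=> size_eq t'_neq_t.
have [x_eq|] := eqVneq (corner n false t) (corner n false t'); last by exists false.
have [y_eq|] := eqVneq (corner n true t) (corner n true t'); last by exists true.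
have t_le : (size t <= n)%N by rewrite (leq_trans (leq_addr 2 _)).
have := dyadic_offset_inj (digit_le1 false) (digit_le1 true) digit_inj t_le size_eq x_eq y_eq.
by move=> t_eq; rewrite t_eq eqxx in t'_neq_t.
Qed.

Lemma cell_supp (R : realType) v : v \in supp (cell_meas R n t) ->
  (forall i, exists2 r, coord n i v = (corner n i t + r)%N
                      & (2 * quarter n (size t) <= r <= 3 * quarter n (size t))%N)
  /\ exists i, coord n i v = center n i t.
Proof.
move=> /cross_supp [j /andP [_ j_le] v_eq].
have := center_fit false; have := center_fit true; rewrite /center => fit_y fit_x.
set Q := quarter n (size t) in j_le fit_x fit_y *.
case: v_eq => ->; split; rewrite /center -/Q.
- by case; rewrite coord_pt; try lia; [exists (2 * Q + j)%N | exists (2 * Q)%N]; lia.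
- by exists false; rewrite coord_pt //; lia.
- by case; rewrite coord_pt; try lia; [exists (2 * Q)%N | exists (2 * Q + j)%N]; lia.
- by exists true; rewrite coord_pt //; lia.
Qed.

End Cell.

Lemma cell_sep {R : realType} {n t t' x y} :
  (size t + 2 <= n)%N -> (size t' + 2 <= n)%N -> t' != t ->
  x \in supp (cell_meas R n t) -> y \in supp (cell_meas R n t') ->
  (2 ^ (n - maxn (size t) (size t')) <= 4 * l1 x y)%N.
Proof.
wlog le_tt' : t t' x y / (size t <= size t')%N.
  move=> hwlog t_fit t'_fit t'_neq_t x_supp y_supp.
  case/orP: (leq_total (size t) (size t')) => le; first exact: hwlog.
  by rewrite maxnC l1C; apply: (hwlog _ _ _ _ le t'_fit t_fit _ y_supp x_supp); rewrite eq_sym.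
move=> t_fit t'_fit t'_neq_t /(cell_supp t_fit) [x_mid [i x_center]].
move=> /(cell_supp t'_fit) [y_mid _].
rewrite (maxn_idPr le_tt') -quarter_side // leq_pmul2l //.
move: le_tt'; rewrite leq_eqVlt => /predU1P [same_size|lt_tt'].
- have [j corner_neq_j] := corner_neq t_fit same_size t'_neq_t.
  have [r x_j r_range] := x_mid j; have [r' y_j r'_range] := y_mid j.
  rewrite same_size in r_range.
  have := absdiff_coord_le_l1 _ j x y; rewrite x_j y_j; apply: leq_trans.
  apply: absdiff_mid_mid _ (corner_dvd t'_fit j) corner_neq_j r_range r'_range.
  by rewrite -same_size (corner_dvd t_fit).
- have [r y_i r_range] := y_mid i.
  have := absdiff_coord_le_l1 _ i x y; rewrite x_center y_i; apply: leq_trans.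
  apply: absdiff_grid_mid _ (corner_dvd t'_fit i) r_range.
  have half_dvd : (2 * quarter n (size t) %| 4 * quarter n (size t))%N.
    by rewrite dvdn_pmul2r ?expn_gt0.
  rewrite /center dvdn_add // (dvdn_trans (quarter_dvd lt_tt' t'_fit)) //.
  exact: dvdn_trans half_dvd (corner_dvd t_fit i).
Qed.

Theorem theorem3p1 (R : realType) (n : nat) (hn : (2 <= n)%N) :
  exists mu : seq 'I_4 -> V n -> R,
    forall t : seq 'I_4, (size t <= n - 2)%N ->
      (\sum_(v : V n) mu t v = 0) /\
      (* (P1) *)
      ((diam (supp (mu t)))%:R <= (2 : R)^-1 * (2 : R) ^+ (n - size t)) /\
      (* (P2) *)
      (forall t' : seq 'I_4, (size t' <= n - 2)%N -> t' != t ->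
         forall x y, x \in supp (mu t) -> y \in supp (mu t') ->
           (4 : R)^-1 * (2 : R) ^+ (n - maxn (size t) (size t')) <= (l1 x y)%:R) /\
      (* (P3) *)
      ((16 : R)^-1 * (4 : R) ^- (size t) <= TCnorm (mu t)) /\
      (* (P4) *)
      (forall A : {set V n},
         `|meas (mu t) A| <=
           (1 : R) * Num.min ((2 : R) ^- (n + 1 + size t)) ((4 : R) ^- n * ((diam A)%:R + 1))) /\
      (* (P5) *)
      (exists u : V n, induced_connected (u |: supp (mu t))).
Proof.
exists (cell_meas R n) => t t_le.
have t_fit : (size t + 2 <= n)%N by lia.
have [x_fit y_fit] := (center_fit t_fit false, center_fit t_fit true).
have e_gt0 : 0 < (4 : R) ^- n by rewrite invr_gt0 exprn_gt0.
split; first exact: meas_of_repr_total.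
split; first by rewrite -(quarter_diam_scale R t_fit) ler_nat (diam_supp_cross x_fit y_fit).
split.
  move=> t' t'_le t'_neq_t x y x_supp y_supp.
  have t'_fit : (size t' + 2 <= n)%N by lia.
  have := cell_sep t_fit t'_fit t'_neq_t x_supp y_supp.
  by rewrite -(ler_nat R) natrM natrX => sep; lra.
split; first by rewrite -(quarter_TC_scale R t_fit); exact: TCnorm_cross.
split.
  move=> A; rewrite mul1r le_min (normr_meas_cross_le_diam x_fit y_fit e_gt0) andbT.
  exact: le_trans (normr_meas_cross_le_len e_gt0 A) (quarter_mass_scale R t_fit).
by exists (pt n (center n false t) (center n true t)); exact: cross_connected.
Qed.
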